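(* Let $G$ be a graph on $V$, $W\subseteq V$ reducible in $G$, and $v,w\in V\setminus W$ (possibly $v=w$). Then $v$ and $w$ are joined by an edge in $\Gamma_W(G)$ if and only if $\operatorname{rank}_G(W\cup\{v\},W\cup\{w\})>\operatorname{rank}_G(W)$. If moreover the principal submatrix of the adjacency matrix $A$ on $W$ is nonsingular, this holds if and only if $\det\big(A_{W\cup\{v\},\,W\cup\{w\}}\big)\neq 0$ over $\mathbf F_2$.
   Context: A graph means a finite simple graph in which loops are allowed, with adjacency matrix $A$ over $\mathbf F_2$ ($A_{vv}=1$ iff $v$ has a loop). Let $\mathcal V$ be the $\mathbf F_2$-vector space with basis $V$ and $\mathcal E(x,y)=x^TAy$. For $W\subseteq V$, $\langle W\rangle$ is the span of $W$ and $\langle W\rangle^{\perp\mathcal E}=\{x:\mathcal E(x,w)=0\ \forall w\in\langle W\rangle\}$. $W$ is reducible in $G$ if $\langle W\rangle+\langle W\rangle^{\perp\mathcal E}=\mathcal V$. For reducible $W$, $\mathcal E^W(x_1,x_2)=\mathcal E(x_1',x_2')$ where $x_i'\in\langle W\rangle^{\perp\mathcal E}$ with $x_i-x_i'\in\langle W\rangle$, and $\Gamma_W(G)$ is the graph on $V\setminus W$ in which $v,w$ (possibly equal) are joined iff $\mathcal E^W(v,w)=1$. $\operatorname{rank}_G(W_1,W_2)$ denotes the $\mathbf F_2$-rank of the submatrix of $A$ with rows $W_1$ and columns $W_2$, and $\operatorname{rank}_G(W)=\operatorname{rank}_G(W,W)$; $A_{X,Y}$ is the submatrix with rows $X$, columns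 $Y$. *)

From HB Require Import structures.
From mathcomp Require Import all_boot all_order all_algebra.
Set Implicit Arguments. Unset Strict Implicit. Unset Printing Implicit Defensive.
Import GRing.Theory.
Local Open Scope ring_scope.

(* A graph (loops allowed) on 'I_n is a symmetric relation e; e v v = loop. *)
Definition adjmx (n : nat) (e : rel 'I_n) : 'M['F_2]_n :=
  \matrix_(i, j) (e i j)%:R.

Definition formE n (e : rel 'I_n) (x y : 'rV['F_2]_n) : 'F_2 :=
  (x *m adjmx e *m y^T) 0 0.

Definition bvec n (v : 'I_n) : 'rV['F_2]_n := delta_mx 0 v.

Definition spanmx n (W : {set 'I_n}) : 'M['F_2]_n :=
  \matrix_(i < n) (if i \in W then bvec i else 0).

Definition in_span n (W : {set 'I_n}) (x : 'rV['F_2]_n) : bool :=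
  (x <= spanmx W)%MS.

Definition in_perp n (e : rel 'I_n) (W : {set 'I_n}) (x : 'rV['F_2]_n) : bool :=
  [forall y : 'rV['F_2]_n, in_span W y ==> (formE e x y == 0)].

Definition reducible n (e : rel 'I_n) (W : {set 'I_n}) : Prop :=
  forall x : 'rV['F_2]_n, exists a b : 'rV['F_2]_n,
    [/\ in_span W a, in_perp e W b & x = a + b].

(* x' in <W>^{perp E} with x - x' in <W> (chosen; unique up to the
   well-definedness of E^W for reducible W) *)
Definition perp_part n (e : rel 'I_n) (W : {set 'I_n}) (x : 'rV['F_2]_n)
  : 'rV['F_2]_n :=
  odflt 0 [pick y : 'rV['F_2]_n | in_perp e W y && in_span W (x - y)].

Definition formEW n (e : rel 'I_n) (W : {set 'I_n}) (x1 x2 : 'rV['F_2]_n)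
  : 'F_2 := formE e (perp_part e W x1) (perp_part e W x2).

Definition gammaW_edge n (e : rel 'I_n) (W : {set 'I_n}) (v w : 'I_n) : bool :=
  [&& v \notin W, w \notin W & formEW e W (bvec v) (bvec w) == 1].

Definition submxG n (e : rel 'I_n) (X Y : {set 'I_n}) : 'M['F_2]_(#|X|, #|Y|) :=
  \matrix_(i < #|X|, j < #|Y|) adjmx e (enum_val i) (enum_val j).

Definition rankG n (e : rel 'I_n) (X Y : {set 'I_n}) : nat := \rank (submxG e X Y).

(* Square submatrix A_{X,Y}, meaningful when #|X| = #|Y|: rows are the
   elements of X, columns the elements of Y (both in enum order). *)
Definition sqsubmxG n (e : rel 'I_n) (X Y : {set 'I_n}) : 'M['F_2]_#|X| :=
  \matrix_(i < #|X|, j < #|X|)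
    adjmx e (enum_val i) (nth (enum_val i) (enum Y) j).

(* Let P = spanmx W be the coordinate projection onto <W> and A the adjacency
   matrix, so that rank_G(X, Y) = rank (P_X A P_Y).  Enlarging W by v on the row
   side and by w on the column side replaces P A P by
   (P + e_v^T e_v) A (P + e_w^T e_w).  Reducibility splits e_v = a + x with a in
   <W> and x A P = 0, and likewise e_w = b + y.  The invertible transvections
   1 - e_v^T a and 1 - b^T e_w turn the two projections into P + e_v^T x and
   P + y^T e_w, and the product collapses to P A P + E(x, y) E_vw.  Row v and
   column w of P A P vanish, so the extra term raises the rank exactly when
   E^W(v, w) = E(x, y) is nonzero.  When A_{W,W} is nonsingular, rank_G(W) = |W|
   and the determinant condition reads rank_G(W + v, W + w) = |W| + 1. *)

From HB Require Import structures.
From mathcomp Require Import all_boot all_order all_algebra.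
Import GRing.Theory.
Set Implicit Arguments.
Unset Strict Implicit.
Local Open Scope ring_scope.

Section RankUpdates.
Variables (F : fieldType) (n : nat).
Implicit Types (K P A : 'M[F]_n) (u a x y z : 'rV[F]_n).

Lemma transvection_unit u a : a *m u^T = 0 -> 1%:M - u^T *m a \in unitmx.
Proof.
move=> au0; suff /mulmx1_unit[] : (1%:M - u^T *m a) *m (1%:M + u^T *m a) = 1%:M by [].
by rewrite mulmxBl mul1mx mulmxDr mulmx1 -mulmxA (mulmxA a) au0 mul0mx mulmx0 addr0 addrK.
Qed.

Lemma mxrank_transvection_mull p u a (M : 'M[F]_(n, p)) :
  a *m u^T = 0 -> \rank ((1%:M - u^T *m a) *m M) = \rank M.
Proof. by move=> au0; rewrite eqmxMfull // row_full_unit transvection_unit. Qed.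

Lemma mxrank_transvection_mulr p u a (M : 'M[F]_(p, n)) :
  a *m u^T = 0 -> \rank (M *m (1%:M - a^T *m u)) = \rank M.
Proof.
move=> au0; rewrite mxrankMfree // row_free_unit.
by rewrite -[a^T *m u]trmxK trmx_mul trmxK -trmx1 -linearB unitmx_tr transvection_unit.
Qed.

Lemma transvection_mul_proj P u a : a *m P = a -> a *m u^T = 0 ->
  (1%:M - u^T *m a) *m (P + u^T *m u) = P + u^T *m (u - a).
Proof.
move=> aP au0; rewrite mulmxBl mul1mx mulmxDr -!mulmxA aP (mulmxA a) au0 mul0mx mulmx0.
by rewrite addr0 mulmxBr addrA.
Qed.

Lemma proj_mul_transvection P z b : P^T = P -> b *m P = b -> b *m z^T = 0 ->
  (P + z^T *m z) *m (1%:M - b^T *m z) = P + (z - b)^T *m z.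
Proof.
move=> sP bP bz0.
have Pb : P *m b^T = b^T by rewrite -sP -trmx_mul bP.
have zb0 : z *m b^T = 0 by rewrite -[z *m _]trmxK trmx_mul trmxK bz0 trmx0.
rewrite mulmxBr mulmx1 mulmxDl !mulmxA Pb -(mulmxA _ z) zb0 mulmx0 mul0mx addr0.
by rewrite linearB /= mulmxBl addrA.
Qed.

Lemma proj_rank_one_update P A u x y z :
  x *m A *m P = 0 -> P *m A *m y^T = 0 ->
  (P + u^T *m x) *m A *m (P + y^T *m z)
    = P *m A *m P + (x *m A *m y^T) 0 0 *: (u^T *m z).
Proof.
move=> xAP PAy; rewrite !(mulmxDl, mulmxDr) -!addrA; congr (_ + _).
rewrite mulmxA PAy mul0mx add0r -!mulmxA (mulmxA x) xAP mulmx0 add0r.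
rewrite (mulmxA x) (mulmxA _ y^T) [_ *m y^T]mx11_scalar mul_scalar_mx.
by rewrite scalemxAr mulmxA.
Qed.

Lemma mxrank_add_scale_delta K (v w : 'I_n) (c : F) :
  delta_mx v v *m K = 0 -> K *m delta_mx w w = 0 ->
  \rank (K + c *: delta_mx v w)%R = (\rank K + (c != 0)%R)%N.
Proof.
move=> vK0 Kw0; have [->|nz_c] := eqVneq c 0; first by rewrite scale0r addr0 addn0.
set D := c *: delta_mx v w.
have vD : delta_mx v v *m D = D by rewrite -scalemxAr mul_delta_mx.
have Dw : D *m delta_mx w w = D by rewrite -scalemxAl mul_delta_mx.
have vKD : delta_mx v v *m (K + D) = D by rewrite mulmxDr vK0 add0r vD.
have eK : (1%:M - delta_mx v v) *m (K + D) = K by rewrite mulmxBl mul1mx vKD addrK.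
(* K and D are both recovered from K + D by left multiplication, and their row
   spaces meet trivially because column w of K vanishes. *)
have -> : ((K + D)%R :=: K + D)%MS.
  apply/eqmxP; rewrite addmx_sub_adds ?addsmx_sub //=.
  by rewrite -{1}eK -{3}vKD !submxMl.
rewrite mxrank_disjoint_sum ?eqmx_scale ?mxrank_delta ?addn1 //.
have [X eX] := submxP (capmxSl K D); have [Y eY] := submxP (capmxSr K D).
have wKD : (K :&: D)%MS *m delta_mx w w = (K :&: D)%MS.
  by rewrite {1}eY -mulmxA Dw -eY.
by rewrite -wKD {1}eX -mulmxA Kw0 mulmx0.
Qed.

End RankUpdates.

Lemma row_free_rowsub1 (F : fieldType) m n (f : 'I_m -> 'I_n) :
  injective f -> row_free (rowsub f 1%:M : 'M[F]_(m, n)).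
Proof.
move=> inj_f; apply/row_freeP; exists (rowsub f 1%:M)^T.
rewrite trmx_mxsub trmx1 mul_rowsub_mx mul1mx; apply/matrixP=> i j.
by rewrite !mxE (inj_eq inj_f).
Qed.

Section CoordinateProjections.
Variable n : nat.
Implicit Type W : {set 'I_n}.

Lemma spanmx_diag W : spanmx W = diag_mx (\row_i (i \in W)%:R).
Proof.
apply/matrixP=> i j; rewrite !mxE; case: ifP => _; rewrite ?mxE ?mul0rn //.
by rewrite eqxx eq_sym mulr1n.
Qed.

Lemma spanmx_tr W : (spanmx W)^T = spanmx W.
Proof. by rewrite spanmx_diag tr_diag_mx. Qed.

Lemma spanmx_idem W : spanmx W *m spanmx W = spanmx W.
Proof.
rewrite {2}spanmx_diag mul_mx_diag; apply/matrixP=> i j.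
rewrite spanmx_diag !mxE; have [->|] := eqVneq i j; last by rewrite !mulr0n mul0r.
by case: (j \in W); rewrite ?mulr0 ?mulr1.
Qed.

Lemma delta_mx_spanmx m (i : 'I_m) v W : v \notin W -> delta_mx i v *m spanmx W = 0.
Proof.
move=> vW; rewrite spanmx_diag mul_mx_diag; apply/matrixP=> k j; rewrite !mxE.
by have [->|] := eqVneq j v; rewrite ?(negPf vW) ?andbF ?mulr0 ?mul0r.
Qed.

Lemma spanmx_delta_mx m (i : 'I_m) v W : v \notin W -> spanmx W *m delta_mx v i = 0.
Proof.
by move=> vW; apply: trmx_inj; rewrite trmx_mul trmx_delta spanmx_tr delta_mx_spanmx ?trmx0.
Qed.

Lemma spanmxU1 v W : v \notin W -> spanmx (v |: W) = spanmx W + (bvec v)^T *m bvec v.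
Proof.
move=> vW; rewrite /bvec trmx_delta mul_delta_mx !spanmx_diag.
apply/matrixP=> i j; rewrite !mxE in_setU1.
have [->|_] := eqVneq i v; last by rewrite addr0.
rewrite (negPf vW) mul0rn add0r eq_sym; by case: (j == v).
Qed.

End CoordinateProjections.

Section Subspaces.
Variables (n : nat) (e : rel 'I_n) (W : {set 'I_n}).

Lemma in_span_mul a : in_span W a -> a *m spanmx W = a.
Proof. by case/submxP=> D ->; rewrite -mulmxA spanmx_idem. Qed.

Lemma in_perp_mul x : in_perp e W x -> x *m adjmx e *m spanmx W = 0.
Proof.
move=> /forallP perp_x; apply/matrixP=> i j; rewrite (ord1 i) [RHS]mxE.
have /implyP/(_ (submxMl _ _))/eqP := perp_x (bvec j *m spanmx W).
by rewrite /formE trmx_mul spanmx_tr mulmxA /bvec trmx_delta -colE mxE.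
Qed.

Lemma perp_partP x : reducible e W ->
  in_perp e W (perp_part e W x) /\ in_span W (x - perp_part e W x).
Proof.
move=> redW; rewrite /perp_part; case: pickP => [y /andP[] //|none].
have [a [b [span_a perp_b def_x]]] := redW x.
by move: (none b); rewrite /= def_x perp_b addrK span_a.
Qed.

End Subspaces.

Section Submatrices.
Variable n : nat.
Implicit Types X Y : {set 'I_n}.

Lemma spanmx_rowsub m (f : 'I_m -> 'I_n) X :
  injective f -> X =i codom f -> spanmx X = (rowsub f 1%:M)^T *m rowsub f 1%:M.
Proof.
move=> inj_f defX; apply/matrixP=> k l; rewrite spanmx_diag !mxE defX.
case: codomP => [[i ->]|not_fX].
  rewrite (bigD1 i) //= big1 => [|i' ne_i'i]; rewrite !mxE ?eqxx.
    by rewrite mul1r addr0 eq_sym.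
  by rewrite (inj_eq inj_f) (negPf ne_i'i) mul0r.
rewrite mul0rn big1 // => i _; rewrite !mxE.
by case: (eqVneq (f i) k) => [fik|]; [case: not_fX; exists i | rewrite mul0r].
Qed.

Lemma mxrank_mxsub m p (f : 'I_m -> 'I_n) (g : 'I_p -> 'I_n) X Y (B : 'M['F_2]_n) :
  injective f -> injective g -> X =i codom f -> Y =i codom g ->
  \rank (mxsub f g B) = \rank (spanmx X *m B *m spanmx Y).
Proof.
move=> inj_f inj_g defX defY.
rewrite (spanmx_rowsub inj_f defX) (spanmx_rowsub inj_g defY).
set S := rowsub f 1%:M; set T := rowsub g 1%:M.
have -> : S^T *m S *m B *m (T^T *m T) = S^T *m (S *m B *m T^T) *m T.
  by rewrite !mulmxA.
rewrite mxrankMfree ?row_free_rowsub1 // -[\rank (S^T *m _)]mxrank_tr trmx_mul trmxK.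
rewrite mxrankMfree ?row_free_rowsub1 // mxrank_tr.
by rewrite -[B]mulmx1 mxsub_mul mulmx1 rowsubE /T trmx_mxsub trmx1.
Qed.

Lemma codom_enum_val X : X =i codom (@enum_val _ (mem X)).
Proof.
move=> k; apply/idP/codomP => [Xk|[i ->]]; last exact: enum_valP.
by exists (enum_rank_in Xk k); rewrite enum_rankK_in.
Qed.

Variable e : rel 'I_n.

Lemma rankG_spanmx X Y : rankG e X Y = \rank (spanmx X *m adjmx e *m spanmx Y).
Proof.
exact: mxrank_mxsub enum_val_inj enum_val_inj (codom_enum_val X) (codom_enum_val Y).
Qed.

Lemma sqsubmxG_mxsub X Y (eqXY : #|X| = #|Y|) :
  sqsubmxG e X Y = mxsub enum_val (enum_val \o cast_ord eqXY) (adjmx e).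
Proof.
apply/matrixP=> i j; rewrite !mxE /enum_val /=.
by congr (e _ _)%:R; apply: set_nth_default; rewrite -cardE -eqXY.
Qed.

Lemma det_sqsubmxG_neq0 X Y : #|X| = #|Y| ->
  (\det (sqsubmxG e X Y) != 0) = (rankG e X Y == #|X|).
Proof.
move=> eqXY; set g := enum_val \o cast_ord eqXY.
have inj_g : injective g by move=> i j /enum_val_inj /cast_ord_inj.
have codom_g : Y =i codom g.
  move=> k; rewrite codom_enum_val; apply/codomP/codomP=> [[i ->]|[i ->]].
    by exists (cast_ord (esym eqXY) i); rewrite /g /= cast_ordKV.
  by exists (cast_ord eqXY i).
rewrite -unitfE -unitmxE -row_free_unit /row_free rankG_spanmx (sqsubmxG_mxsub eqXY).
by rewrite (mxrank_mxsub _ enum_val_inj inj_g (codom_enum_val X) codom_g).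
Qed.

End Submatrices.

Section Reduction.
Variables (n : nat) (e : rel 'I_n) (W : {set 'I_n}).
Hypotheses (sym_e : symmetric e) (redW : reducible e W).

Lemma adjmx_tr : (adjmx e)^T = adjmx e.
Proof. by apply/matrixP=> i j; rewrite !mxE sym_e. Qed.

Lemma in_span_mul_bvec_tr a v : in_span W a -> v \notin W -> a *m (bvec v)^T = 0.
Proof.
move=> span_a vW.
by rewrite -(in_span_mul span_a) -mulmxA /bvec trmx_delta spanmx_delta_mx ?mulmx0.
Qed.

Lemma rankG_setU1 v w : v \notin W -> w \notin W ->
  rankG e (v |: W) (w |: W) = (rankG e W W + (formEW e W (bvec v) (bvec w) != 0)%R)%N.
Proof.
move=> vW wW; set P := spanmx W; set A := adjmx e; set u := bvec v; set z := bvec w.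
have [perp_x span_ux] := perp_partP u redW; have [perp_y span_zy] := perp_partP z redW.
set x := perp_part e W u in perp_x span_ux *; set y := perp_part e W z in perp_y span_zy *.
have ux : u - (u - x) = x by rewrite opprB addrC subrK.
have zy : z - (z - y) = y by rewrite opprB addrC subrK.
have PAy : P *m A *m y^T = 0.
  by rewrite -[P]spanmx_tr -[A]adjmx_tr -!trmx_mul mulmxA in_perp_mul ?trmx0.
have ux0 := in_span_mul_bvec_tr span_ux vW; have zy0 := in_span_mul_bvec_tr span_zy wW.
rewrite !rankG_spanmx (spanmxU1 vW) (spanmxU1 wW).
rewrite -(mxrank_transvection_mull _ ux0) -(mxrank_transvection_mulr _ zy0).
rewrite !mulmxA -(mulmxA _ (P + _)).
rewrite transvection_mul_proj ?proj_mul_transvection ?spanmx_tr ?in_span_mul //.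
rewrite ux zy proj_rank_one_update ?in_perp_mul //.
rewrite /u /z /bvec trmx_delta mul_delta_mx mxrank_add_scale_delta //.
  by rewrite !mulmxA delta_mx_spanmx ?mul0mx.
by rewrite -!mulmxA spanmx_delta_mx ?mulmx0.
Qed.

End Reduction.

Lemma F2_neq0 (c : 'F_2) : (c != 0) = (c == 1).
Proof. by case: c => [[|[|k]] //]. Qed.

Theorem mainTheorem5 (n : nat) (e : rel 'I_n) (He : symmetric e)
  (W : {set 'I_n}) (HW : reducible e W) (v w : 'I_n)
  (Hv : v \notin W) (Hw : w \notin W) :
  (gammaW_edge e W v w = (rankG e W W < rankG e (v |: W) (w |: W))%N) /\
  (\det (sqsubmxG e W W) != 0 ->
     gammaW_edge e W v w = (\det (sqsubmxG e (v |: W) (w |: W)) != 0)).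
Proof.
have -> : gammaW_edge e W v w = (formEW e W (bvec v) (bvec w) != 0).
  by rewrite /gammaW_edge Hv Hw F2_neq0.
have card_vW : #|v |: W| = #|w |: W| by rewrite !cardsU1 Hv Hw.
rewrite !det_sqsubmxG_neq0 // (rankG_setU1 He HW Hv Hw) cardsU1 Hv add1n.
split; [|move/eqP->]; case: (_ != 0);
  by rewrite ?addn0 ?addn1 ?ltnSn ?ltnn ?eqxx ?(ltn_eqF (ltnSn _)).
Qed.
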